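(* Let $V=\mathbb{R}^{16}$, with coordinates indexed by $(a,b,x,y)\in\{0,1\}^4$, and let $G$ be the relabeling group of the $(2,2,2)$ Bell scenario acting on $V$ (defined in the context). Define the subspaces $V_{\mathrm{NO}_1}=\operatorname{span}\{\vec Q_{++++}\}$, $V_{\mathrm{NO}_2}=\operatorname{span}\{\vec Q_{+++-},\vec Q_{++-+}\}$, $V_{\mathrm{NO}_3}=\operatorname{span}\{\vec Q_{++--}\}$, $V_{\mathrm{marg}}=\operatorname{span}\{\vec Q_{-+++},\vec Q_{-+-+},\vec Q_{+-++},\vec Q_{+-+-}\}$, $V_{\mathrm{corr}}=\operatorname{span}\{\vec Q_{--++},\vec Q_{--+-},\vec Q_{---+},\vec Q_{----}\}$, $V_{\mathrm{SI}}=\operatorname{span}\{\vec Q_{+--+},\vec Q_{+---},\vec Q_{-++-},\vec Q_{-+--}\}$. Then $V=V_{\mathrm{NO}_1}\oplus V_{\mathrm{NO}_2}\oplus V_{\mathrm{NO}_3}\oplus V_{\mathrm{marg}}\oplus V_{\mathrm{corr}}\oplus V_{\mathrm{SI}}$, these six subspaces are mutually orthogonal, each is $G$-invariant and is an irreducible representation of $G$, and the six representations are pairwise nonequivalent. Consequently this is the unique decomposition of $V$ into $G$-irreducible subspaces (the finest $G$-invariant decomposition), and for every $g\in G$ and $\vec P\in V$ the component of $g\vec P$ in each of these subspaces is $g$ applied to the component of $\vec P$ in that subspace.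
   Context: For $i,j,k,l\in\{+1,-1\}$ (written $\pm$), $\vec Q_{ijkl}\in V$ is the vector with entries $Q_{ijkl}(ab|xy)=i^a j^b k^x l^y$. The relabeling group $G$ is the group of permutations of the index set $\{0,1\}^4$ (acting on $V$ by permuting coordinates, $(g\vec P)(g(a,b,x,y))=P(a,b,x,y)$) generated by: flipping Alice's outcome $a\mapsto 1-a$ only for indices with a given value of $x$ (for each $x\in\{0,1\}$); flipping Bob's outcome $b\mapsto 1-b$ only for indices with a given value of $y$; flipping Alice's setting $x\mapsto 1-x$; flipping Bob's setting $y\mapsto 1-y$; and exchanging the parties $(a,b,x,y)\mapsto(b,a,y,x)$. It is the wreath product $(\mathfrak S_2\wr\mathfrak S_2)\wr\mathfrak S_2$, of order 128. *)

From HB Require Import structures.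
From mathcomp Require Import all_boot all_algebra all_fingroup.
From mathcomp Require Import mxrepresentation.
From mathcomp Require Import reals.
Set Implicit Arguments. Unset Strict Implicit. Unset Printing Implicit Defensive.
Import GRing.Theory Num.Theory.
Local Open Scope ring_scope.

(** Index set {0,1}^4 of tuples (a,b,x,y); [false] = 0, [true] = 1. *)
Definition T4 : finType := (bool * bool * bool * bool)%type.

Definition n4 : nat := #|{: T4}|.

Definition idx (c : 'I_n4) : T4 := enum_val (c : 'I_#|{: T4}|).
Definition rnk (t : T4) : 'I_n4 := enum_rank t.

Lemma idxK : cancel idx rnk.
Proof. by move=> c; rewrite /idx /rnk enum_valK. Qed.
Lemma rnkK : cancel rnk idx.
Proof. by move=> t; rewrite /idx /rnk enum_rankK. Qed.

Definition transp (f : T4 -> T4) (c : 'I_n4) : 'I_n4 := rnk (f (idx c)).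

Lemma transp_inj (f : T4 -> T4) : involutive f -> injective (transp f).
Proof.
move=> fK; apply: (can_inj (g := transp f)) => c.
by rewrite /transp rnkK fK idxK.
Qed.

Definition flipA (x0 : bool) (t : T4) : T4 :=
  let: (a, b, x, y) := t in (if x == x0 then ~~ a else a, b, x, y).
Definition flipB (y0 : bool) (t : T4) : T4 :=
  let: (a, b, x, y) := t in (a, if y == y0 then ~~ b else b, x, y).
Definition flipX (t : T4) : T4 := let: (a, b, x, y) := t in (a, b, ~~ x, y).
Definition flipY (t : T4) : T4 := let: (a, b, x, y) := t in (a, b, x, ~~ y).
Definition swapAB (t : T4) : T4 := let: (a, b, x, y) := t in (b, a, y, x).

Lemma flipA_inv x0 : involutive (flipA x0).
Proof. by case=> [[[a b] x] y] /=; case: (x == x0); rewrite ?negbK. Qed.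
Lemma flipB_inv y0 : involutive (flipB y0).
Proof. by case=> [[[a b] x] y] /=; case: (y == y0); rewrite ?negbK. Qed.
Lemma flipX_inv : involutive flipX.
Proof. by case=> [[[a b] x] y] /=; rewrite negbK. Qed.
Lemma flipY_inv : involutive flipY.
Proof. by case=> [[[a b] x] y] /=; rewrite negbK. Qed.
Lemma swapAB_inv : involutive swapAB.
Proof. by case=> [[[a b] x] y]. Qed.

Definition gA (x0 : bool) : 'S_n4 := perm (transp_inj (flipA_inv x0)).
Definition gB (y0 : bool) : 'S_n4 := perm (transp_inj (flipB_inv y0)).
Definition gX : 'S_n4 := perm (transp_inj flipX_inv).
Definition gY : 'S_n4 := perm (transp_inj flipY_inv).
Definition gSwap : 'S_n4 := perm (transp_inj swapAB_inv).

(** The relabeling group G (order 128), as a group of permutations of the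
    coordinate index set. *)
Definition relabG : {group 'S_n4} :=
  <<[set gA false; gA true; gB false; gB true; gX; gY; gSwap]>>%G.

(** The action of G on V = 'rV[R]_n4: (g P)(g c) = P c, i.e. g P = P *m perm_mx g. *)
Lemma relab_mx_repr (R : comUnitRingType) :
  mx_repr relabG (fun g : 'S_n4 => perm_mx g : 'M[R]_n4).
Proof. by split; [exact: perm_mx1 | move=> g h _ _; exact: perm_mxM]. Qed.

Definition relabRepr (R : comUnitRingType) : mx_representation R relabG n4 :=
  MxRepresentation (relab_mx_repr R).

Definition Qv (R : comUnitRingType) (i j k l : R) : 'rV[R]_n4 :=
  \row_c (let: (a, b, x, y) := idx c in i ^+ a * j ^+ b * k ^+ x * l ^+ y).

Section Spaces.
Variable R : realType.
Notation Q := (@Qv R).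

Definition V_NO1 : 'M[R]_n4 := << Q 1 1 1 1 >>%MS.
Definition V_NO2 : 'M[R]_n4 := << col_mx (Q 1 1 1 (-1)) (Q 1 1 (-1) 1) >>%MS.
Definition V_NO3 : 'M[R]_n4 := << Q 1 1 (-1) (-1) >>%MS.
Definition V_marg : 'M[R]_n4 :=
  << col_mx (col_mx (Q (-1) 1 1 1) (Q (-1) 1 (-1) 1))
            (col_mx (Q 1 (-1) 1 1) (Q 1 (-1) 1 (-1))) >>%MS.
Definition V_corr : 'M[R]_n4 :=
  << col_mx (col_mx (Q (-1) (-1) 1 1) (Q (-1) (-1) 1 (-1)))
            (col_mx (Q (-1) (-1) (-1) 1) (Q (-1) (-1) (-1) (-1))) >>%MS.
Definition V_SI : 'M[R]_n4 :=
  << col_mx (col_mx (Q 1 (-1) (-1) 1) (Q 1 (-1) (-1) (-1)))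
            (col_mx (Q (-1) 1 1 (-1)) (Q (-1) 1 (-1) (-1))) >>%MS.
End Spaces.

Definition Wfam (R : realType) (i : 'I_6) : 'M[R]_n4 :=
  nth 0 [:: V_NO1 R; V_NO2 R; V_NO3 R; V_marg R; V_corr R; V_SI R] i.

Definition component (R : realType) (i : 'I_6) : 'M[R]_n4 :=
  proj_mx (Wfam R i) (\sum_(j < 6 | j != i) Wfam R j)%MS.

(* Write Q_r(t) = (-1)^(r.t) for labels r and indices t in {0,1}^4: the sixteen
   vectors Q_r are the characters of (Z/2)^4, an orthogonal basis of V, and
   Q_{ijkl} is Q_r with i = (-1)^r1, ..., l = (-1)^r4.  Each generator of G maps
   every Q_r to +-Q_s, where s is obtained from r by a map preserving a
   partition of the labels into six blocks, and the six subspaces are the spans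
   of the blocks.  The four involutions of G flipping a, b, x or y for both
   values of the setting act diagonally on this basis, with joint eigenlines the
   lines Q_r; the product of their spectral projectors (1 +- g)/2 is thus an
   element of the group algebra projecting V onto Q_r.  Consequently every
   G-submodule is the sum of the lines Q_r it meets, and since G moves the lines
   of a block transitively, it is a sum of some of the six subspaces.  This
   gives invariance, irreducibility and uniqueness; inequivalence holds because
   module isomorphisms commute with the projectors onto the lines. *)

From HB Require Import structures.
From mathcomp Require Import all_boot all_algebra all_fingroup.
From mathcomp Require Import mxrepresentation.
From mathcomp Require Import reals ring.
Import GRing.Theory Num.Theory.
Local Open Scope ring_scope.
Set Implicit Arguments. Unset Strict Implicit. Unset Printing Implicit Defensive.

Section MatrixSpaces.
Variables (F : fieldType) (n : nat).

Lemma sub_rV_nz m (v : 'rV[F]_n) (A : 'M_(m, n)) :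
  (A <= v)%MS -> A != 0 -> (v <= A)%MS.
Proof.
move=> sAv nzA; have [_ <-] := mxrank_leqif_sup sAv.
by rewrite eqn_leq mxrankS // (leq_trans (rank_leq_row v)) // lt0n mxrank_eq0.
Qed.

Lemma mxdirect_sub_sum (I : finType) (W : I -> 'M[F]_n) (P : pred I) i :
  mxdirect (\sum_j W j) -> W i != 0 -> (W i <= \sum_(j | P j) W j)%MS -> P i.
Proof.
move=> /mxdirect_sumsP dxW nzWi sWi; apply: contraNT nzWi => notPi.
rewrite -submx0 -(dxW i isT) sub_capmx submx_refl (submx_trans sWi) //.
by apply/sumsmx_subP => j Pj; apply: sumsmx_sup => //; apply: contraNneq notPi => <-.
Qed.

Lemma mxdirect_reindex_bij k m (W : 'I_k -> 'M[F]_n) (U : 'I_m -> 'M[F]_n)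
    (s : 'I_m -> 'I_k) :
  mxdirect (\sum_i W i) -> (forall i, W i != 0) ->
  mxdirect (\sum_l U l) -> (\sum_i W i <= \sum_l U l)%MS ->
  (forall l, U l == W (s l))%MS -> bijective s.
Proof.
move=> dxW nzW dxU sWU eqU.
have nzU l : U l != 0 by rewrite (eqmx_eq0 (eqmxP (eqU l))).
have inj_s : injective s.
  move=> l1 l2 eq_s; apply/eqP; apply: (mxdirect_sub_sum (P := pred1 l2) dxU) => //.
  by rewrite big_pred1_eq (eqmxP (eqU l1)) eq_s -(eqmxP (eqU l2)).
apply: (inj_card_bij inj_s); rewrite -(card_codom inj_s) subset_leq_card //.
apply/subsetP => i _; apply: (mxdirect_sub_sum (P := mem (codom s)) dxW) => //.
apply: submx_trans (sumsmx_sup i isT (submx_refl _)) _.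
apply: submx_trans sWU _; apply/sumsmx_subP => l _.
by rewrite (eqmxP (eqU l)); apply: (sumsmx_sup (s l)) => //; exact: codom_f.
Qed.

End MatrixSpaces.

Section EnvelopingAlgebra.
Variables (F : fieldType) (gT : finGroupType) (G : {group gT}) (n : nat).
Variable rG : mx_representation F G n.
Local Notation E_G := (enveloping_algebra_mx rG).

Definition eigenproj (e : F) (A : 'M[F]_n) : 'M[F]_n := 2^-1 *: (1%:M + e *: A).

Lemma eigenproj_envelop e A : (A \in E_G)%MS -> (eigenproj e A \in E_G)%MS.
Proof.
move=> EA; rewrite /eigenproj !linearZ linearD linearZ /=.
by rewrite scalemx_sub // addmx_sub ?envelop_mx1 // scalemx_sub.
Qed.

Lemma proj_mx_reprC (U V : 'M_n) m (v : 'M_(m, n)) x :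
    (U :&: V = 0)%MS -> mxmodule rG U -> mxmodule rG V ->
    (v <= U + V)%MS -> x \in G ->
  v *m rG x *m proj_mx U V = v *m proj_mx U V *m rG x.
Proof.
move=> dxUV modU modV sv Gx.
exact: (hom_mxP (submx_trans sv (proj_mx_hom dxUV modU modV))).
Qed.

End EnvelopingAlgebra.

Definition dotb (r t : T4) : bool :=
  let: (r1, r2, r3, r4) := r in let: (a, b, x, y) := t in
  (r1 && a) (+) (r2 && b) (+) (r3 && x) (+) (r4 && y).

Definition addb4 (r s : T4) : T4 :=
  let: (r1, r2, r3, r4) := r in let: (s1, s2, s3, s4) := s in
  (r1 (+) s1, r2 (+) s2, r3 (+) s3, r4 (+) s4).

Lemma dotb_addl r s t : dotb (addb4 r s) t = dotb r t (+) dotb s t.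
Proof.
case: r s t => [[[r1 r2] r3] r4] [[[s1 s2] s3] s4] [[[a b] x] y] /=.
rewrite !andb_addl (addbACA (r1 && a)) (addbACA (r1 && a (+) r2 && b)).
by rewrite (addbACA (r1 && a (+) r2 && b (+) r3 && x)).
Qed.

(* The block of the label r, numbered as in [Wfam]: NO1, NO2, NO3, marg, corr, SI. *)
Definition blk_nat (r : T4) : nat :=
  let: (a, b, c, d) := r in
  (if ~~ a && ~~ b then c + d
   else if a && b then 4 else if (a && ~~ d) || (b && ~~ c) then 3 else 5)%N.

Lemma blk_nat_lt r : (blk_nat r < 6)%N.
Proof. by case: r => [[[[] []] []] []]. Qed.

Definition blk (r : T4) : 'I_6 := Ordinal (blk_nat_lt r).

Lemma blk_surj i : exists r, blk r = i.
Proof.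
exists (nth (false, false, false, false)
  [:: (false, false, false, false); (false, false, false, true); (false, false, true, true);
      (true, false, false, false); (true, true, false, false); (false, true, true, false)] i).
by apply: val_inj; case: i => -[|[|[|[|[|[|//]]]]]].
Qed.

Lemma blk_relabel a b c d :
  [/\ blk (a, b, c (+) a, d) = blk (a, b, c, d), blk (a, b, c, d (+) b) = blk (a, b, c, d)
    & blk (b, a, d, c) = blk (a, b, c, d)].
Proof. by split; apply: val_inj; case: a b c d => [] [] [] []. Qed.

(* Up to sign, [gA false * gSwap] maps Q_r to Q_(rot r); each block is a cycle of rot. *)
Definition rot (r : T4) : T4 := let: (a, b, c, d) := r in (b, a, d, c (+) a).

Lemma blk_traject_rot r s : blk r == blk s -> s \in traject rot r 4.
Proof. by apply/implyP; case: r s => [[[[] []] []] []] [[[[] []] []] []]. Qed.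

Section Characters.
Context {R : comUnitRingType}.

Definition sign (b : bool) : R := if b then -1 else 1.

Lemma signD b c : sign (b (+) c) = sign b * sign c.
Proof. by case: b c => [] []; rewrite /sign /= ?mulN1r ?opprK ?mul1r. Qed.

Lemma signX b (a : bool) : sign b ^+ a = sign (b && a).
Proof. by case: a b => [] []. Qed.

Definition Qvec (r : T4) : 'rV[R]_n4 :=
  let: (r1, r2, r3, r4) := r in Qv (sign r1) (sign r2) (sign r3) (sign r4).

Lemma QvE a b c d : Qv (sign a) (sign b) (sign c) (sign d) = Qvec (a, b, c, d).
Proof. by []. Qed.

Lemma sign_neq0 b : sign b != 0 :> R.
Proof. by case: b; rewrite /sign ?oppr_eq0 oner_eq0. Qed.

Lemma QvecE r c : Qvec r 0 c = sign (dotb r (idx c)).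
Proof.
case: r => [[[r1 r2] r3] r4]; rewrite mxE.
by case: (idx c) => [[[a b] x] y]; rewrite !signX !signD.
Qed.

Lemma sum_sign_dotb d :
  \sum_(t : T4) sign (dotb d t) = if d == (false, false, false, false) then 16 else 0.
Proof.
have -> : \sum_(t : T4) sign (dotb d t) =
    \sum_(a : bool) \sum_(b : bool) \sum_(x : bool) \sum_(y : bool) sign (dotb d (a, b, x, y)).
  by rewrite !pair_bigA; apply: eq_bigr => -[[[a b] x] y].
rewrite !big_bool.
by case: d => [[[[] []] []] []]; rewrite /sign /=; ring.
Qed.

Lemma addb4_eq0 r s : (addb4 r s == (false, false, false, false)) = (r == s).
Proof. by case: r s => [[[[] []] []] []] [[[[] []] []] []]. Qed.

Lemma Qvec_dot r s : Qvec r *m (Qvec s)^T = (if r == s then 16 else 0)%:M.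
Proof.
apply/matrixP => i j; rewrite !ord1 !mxE /=.
under eq_bigr do rewrite !mxE !QvecE -signD -dotb_addl.
rewrite -(big_enum_val (fun t => sign (dotb (addb4 r s) t))).
by rewrite sum_sign_dotb addb4_eq0; case: (r == s).
Qed.

Lemma perm_transp_inv (f : T4 -> T4) (fK : involutive f) c :
  ((perm (transp_inj fK))^-1)%g c = transp f c.
Proof. by apply: (canLR (permK _)); rewrite permE /transp rnkK fK idxK. Qed.

Lemma Qvec_relabel (f : T4 -> T4) (fK : involutive f) e r s :
    (forall t, dotb r (f t) = e (+) dotb s t) ->
  Qvec r *m perm_mx (perm (transp_inj fK)) = sign e *: Qvec s.
Proof.
move=> dotb_f; apply/rowP => c; rewrite -[perm _]invgK -col_permE !mxE.
by rewrite !QvecE perm_transp_inv /transp rnkK dotb_f signD.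
Qed.

Lemma Qvec_gA x0 a b c d :
  Qvec (a, b, c, d) *m perm_mx (gA x0) = sign (a && ~~ x0) *: Qvec (a, b, c (+) a, d).
Proof.
apply: Qvec_relabel => -[[[ta tb] tx] ty].
by case: a b c d x0 ta tb tx ty => [] [] [] [] [] [] [] [] [].
Qed.

Lemma Qvec_gB y0 a b c d :
  Qvec (a, b, c, d) *m perm_mx (gB y0) = sign (b && ~~ y0) *: Qvec (a, b, c, d (+) b).
Proof.
apply: Qvec_relabel => -[[[ta tb] tx] ty].
by case: a b c d y0 ta tb tx ty => [] [] [] [] [] [] [] [] [].
Qed.

Lemma Qvec_gX a b c d : Qvec (a, b, c, d) *m perm_mx gX = sign c *: Qvec (a, b, c, d).
Proof.
apply: Qvec_relabel => -[[[ta tb] tx] ty].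
by case: a b c d ta tb tx ty => [] [] [] [] [] [] [] [].
Qed.

Lemma Qvec_gY a b c d : Qvec (a, b, c, d) *m perm_mx gY = sign d *: Qvec (a, b, c, d).
Proof.
apply: Qvec_relabel => -[[[ta tb] tx] ty].
by case: a b c d ta tb tx ty => [] [] [] [] [] [] [] [].
Qed.

Lemma Qvec_gSwap a b c d : Qvec (a, b, c, d) *m perm_mx gSwap = Qvec (b, a, d, c).
Proof.
rewrite -[RHS]scale1r; apply: (@Qvec_relabel _ _ false) => -[[[ta tb] tx] ty].
by case: a b c d ta tb tx ty => [] [] [] [] [] [] [] [].
Qed.

Lemma Qvec_rot a b c d :
  Qvec (a, b, c, d) *m perm_mx (gA false * gSwap) = sign a *: Qvec (rot (a, b, c, d)).
Proof. by rewrite perm_mxM mulmxA Qvec_gA andbT -scalemxAl Qvec_gSwap. Qed.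

Definition tA : 'S_n4 := (gA false * gA true)%g.
Definition tB : 'S_n4 := (gB false * gB true)%g.

Lemma Qvec_tA a b c d : Qvec (a, b, c, d) *m perm_mx tA = sign a *: Qvec (a, b, c, d).
Proof. by rewrite perm_mxM mulmxA Qvec_gA -scalemxAl Qvec_gA addbK andbF andbT scale1r. Qed.

Lemma Qvec_tB a b c d : Qvec (a, b, c, d) *m perm_mx tB = sign b *: Qvec (a, b, c, d).
Proof. by rewrite perm_mxM mulmxA Qvec_gB -scalemxAl Qvec_gB addbK andbF andbT scale1r. Qed.

End Characters.

Section Projectors.
Context {R : numFieldType}.
Local Notation sign := (@sign R).
Local Notation Qvec := (@Qvec R).

Lemma mul_eigenproj m n (v : 'M[R]_(m, n)) A b b' :
  v *m A = sign b *: v -> v *m eigenproj (sign b') A = (b == b')%:R *: v.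
Proof.
move=> vA; rewrite /eigenproj -scalemxAr mulmxDr mulmx1 -scalemxAr vA scalerA.
rewrite -[X in X + _]scale1r -scalerDl scalerA; congr (_ *: _); clear vA.
by case: b b' => [] []; rewrite /sign /=; field.
Qed.

Definition Proj (r : T4) : 'M[R]_n4 :=
  let: (a, b, c, d) := r in
  eigenproj (sign a) (perm_mx tA) *m eigenproj (sign b) (perm_mx tB) *m
  eigenproj (sign c) (perm_mx gX) *m eigenproj (sign d) (perm_mx gY).

Lemma Qvec_mul_Proj s r : Qvec s *m Proj r = (s == r)%:R *: Qvec s.
Proof.
case: s r => [[[a b] c] d] [[[a' b'] c'] d'] /=; rewrite !mulmxA.
rewrite (mul_eigenproj _ (Qvec_tA a b c d)) -scalemxAl.
rewrite (mul_eigenproj _ (Qvec_tB a b c d)) -!scalemxAl.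
rewrite (mul_eigenproj _ (Qvec_gX a b c d)) -!scalemxAl.
rewrite (mul_eigenproj _ (Qvec_gY a b c d)) !scalerA; congr (_ *: _).
by rewrite -!natrM !mulnb !xpair_eqE.
Qed.

Lemma Qvec_neq0 r : Qvec r != 0.
Proof.
apply/eqP => Q0; have := Qvec_dot (R := R) r r; rewrite Q0 mul0mx eqxx.
by move=> /matrixP/(_ 0 0)/esym/eqP; rewrite !mxE eqxx mulr1n pnatr_eq0.
Qed.

Definition Qm : 'M[R]_n4 := \matrix_(c < n4) Qvec (idx c).

Lemma Qm_unit : Qm \in unitmx.
Proof.
have QmQmT : Qm *m Qm^T = 16%:M.
  apply/matrixP => c c'.
  have := congr1 (fun M : 'M[R]_1 => M 0 0) (Qvec_dot (R := R) (idx c) (idx c')).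
  rewrite (inj_eq (can_inj idxK)) !mxE eqxx mulr1n mulrb => <-.
  by apply: eq_bigr => k _; rewrite !mxE.
suff /mulmx1_unit[] : Qm *m (16^-1 *: Qm^T) = 1%:M by [].
by rewrite -scalemxAr QmQmT scale_scalar_mx mulVf // pnatr_eq0.
Qed.

Lemma sum_Proj : \sum_(r : T4) Proj r = 1%:M.
Proof.
apply: (can_inj (mulKmx Qm_unit)); rewrite mulmx1 mulmx_sumr.
apply/row_matrixP => c; rewrite linear_sum rowK (bigD1 (idx c)) //=.
rewrite row_mul rowK Qvec_mul_Proj eqxx scale1r big1 ?addr0 // => r ne.
by rewrite row_mul rowK Qvec_mul_Proj eq_sym (negbTE ne) scale0r.
Qed.

Lemma mul_Proj_sub m (v : 'M_(m, n4)) r : (v *m Proj r <= Qvec r)%MS.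
Proof.
have sv : (v <= Qm)%MS by rewrite submx_full // row_full_unit Qm_unit.
apply: submx_trans (submxMr _ sv) _; apply/row_subP => c.
rewrite row_mul rowK Qvec_mul_Proj.
by case: eqP => [-> | _]; rewrite ?scale1r ?scale0r ?sub0mx.
Qed.

Lemma Proj_envelop r : (Proj r \in enveloping_algebra_mx (relabRepr R))%MS.
Proof.
have G_mx g : g \in [set gA false; gA true; gB false; gB true; gX; gY; gSwap] ->
    (perm_mx g \in enveloping_algebra_mx (relabRepr R))%MS.
  by move=> g_gen; apply: (envelop_mx_id (relabRepr R)); rewrite mem_gen.
case: r => [[[a b] c] d]; rewrite /Proj.
do !apply: envelop_mxM; apply: eigenproj_envelop;
  by rewrite ?perm_mxM ?envelop_mxM ?G_mx ?inE ?eqxx ?orbT.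
Qed.
End Projectors.

Ltac sub_col_mx := first [ exact: submx_refl
  | rewrite -addsmxE; apply: (submx_trans _ (addsmxSl _ _)); sub_col_mx
  | rewrite -addsmxE; apply: (submx_trans _ (addsmxSr _ _)); sub_col_mx ].

Section Blocks.
Context {R : realType}.
Local Notation sign := (@sign R).
Local Notation Qvec := (@Qvec R).
Local Notation Proj := (@Proj R).
Local Notation W := (Wfam R).
Local Notation rG := (relabRepr R).

Lemma Wfam_span i : (W i :=: \sum_(r | blk r == i) <<Qvec r>>)%MS.
Proof.
have Qvec_sub r : blk r == i -> (Qvec r <= \sum_(s | blk s == i) <<Qvec s>>)%MS.
  by move=> ri; apply: (sumsmx_sup r) => //; rewrite genmxE.
(* Fold the literal signs of the definitions so that their rows read as [Qvec]s. *)
have signT : -1 = sign true by [].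
have signF : 1 = sign false by [].
apply/eqmxP/andP; split.
  case: i Qvec_sub => -[|[|[|[|[|[|//]]]]]] ? Qvec_sub;
  rewrite /Wfam /= /V_NO1 /V_NO2 /V_NO3 /V_marg /V_corr /V_SI genmxE;
  by rewrite ?signT signF !QvE ?col_mx_sub ?Qvec_sub.
apply/sumsmx_subP => r /eqP <-; rewrite genmxE {Qvec_sub}.
case: r => [[[[] []] []] []];
  rewrite /Wfam /= /V_NO1 /V_NO2 /V_NO3 /V_marg /V_corr /V_SI genmxE;
  rewrite ?signT signF !QvE; sub_col_mx.
Qed.

Lemma Qvec_sub_Wfam r : (Qvec r <= W (blk r))%MS.
Proof. by rewrite Wfam_span (sumsmx_sup r) ?genmxE. Qed.

Lemma Wfam_subP i m (M : 'M_(m, n4)) :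
  reflect (forall r, blk r == i -> (Qvec r <= M)%MS) (W i <= M)%MS.
Proof.
rewrite Wfam_span; apply: (iffP sumsmx_subP) => sQM r /sQM; by rewrite genmxE.
Qed.

Lemma Wfam_neq0 i : W i != 0.
Proof.
have [r <-] := blk_surj i; apply: contraNneq _ (Qvec_neq0 (R := R) r) => W0.
by rewrite -submx0 -W0 Qvec_sub_Wfam.
Qed.

Lemma Wfam_mul_Proj i r : blk r != i -> W i *m Proj r = 0.
Proof.
move=> ri; apply/sub_kermxP/Wfam_subP => s si; apply/sub_kermxP.
rewrite Qvec_mul_Proj (_ : s == r = false) ?scale0r //.
by apply: contraNF ri => /eqP <-.
Qed.

Lemma sum_mul_Proj m (M : 'M_(m, n4)) : \sum_(r : T4) M *m Proj r = M.
Proof. by rewrite -mulmx_sumr sum_Proj mulmx1. Qed.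

Lemma sum_Wfam_mul_Proj (P : pred 'I_6) m (v : 'M_(m, n4)) r :
  (v <= \sum_(i | P i) W i)%MS -> ~~ P (blk r) -> v *m Proj r = 0.
Proof.
move=> sv nPr; apply/sub_kermxP; apply: submx_trans sv _.
apply/sumsmx_subP => i Pi; apply/sub_kermxP/Wfam_mul_Proj.
by apply: contraNneq nPr => ->.
Qed.

Lemma mxdirect_sum_Wfam : mxdirect (\sum_i W i).
Proof.
apply/mxdirect_sumsP => i _; apply/eqP; rewrite -submx0.
set v := (W i :&: _)%MS; rewrite -(sum_mul_Proj v) summx_sub // => r _.
have [ri | nri] := eqVneq (blk r) i.
  by rewrite (@sum_Wfam_mul_Proj (fun j => j != i)) ?capmxSr ?ri ?eqxx.
by rewrite (@sum_Wfam_mul_Proj (pred1 i)) ?big_pred1_eq ?capmxSl.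
Qed.

Lemma Wfam_sub_eq i j : (W i <= W j)%MS -> i = j.
Proof.
move=> sWij; apply/eqP; apply: (mxdirect_sub_sum (P := pred1 j) mxdirect_sum_Wfam).
  exact: Wfam_neq0.
by rewrite big_pred1_eq.
Qed.

Lemma Qvec_orth r s : blk r != blk s -> Qvec r *m (Qvec s)^T = 0.
Proof.
move=> rs; rewrite Qvec_dot (_ : r == s = false) ?raddf0 //.
by apply: contraNF rs => /eqP ->.
Qed.

Lemma Wfam_orth i j : i != j -> W i *m (W j)^T = 0.
Proof.
move=> ij; apply/sub_kermxP/Wfam_subP => r /eqP ri; apply/sub_kermxP.
rewrite -[LHS]trmxK trmx_mul trmxK; apply/eqP; rewrite trmx_eq0; apply/eqP.
apply/sub_kermxP/Wfam_subP => s /eqP sj; apply/sub_kermxP/Qvec_orth.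
by rewrite sj ri eq_sym.
Qed.

Lemma Wfam_module i : mxmodule rG (W i).
Proof.
rewrite /mxmodule gen_subG; apply/subsetP => g g_gen.
rewrite inE mem_gen //=; rewrite (eqmxMr _ (Wfam_span i)) sumsmxMr.
apply/sumsmx_subP => r /eqP <-; rewrite (eqmxMr _ (genmxE _)).
case: r => [[[a b] c] d]; have [blkA blkB blkS] := blk_relabel a b c d.
have sub_W s : blk s = blk (a, b, c, d) -> (Qvec s <= W (blk (a, b, c, d)))%MS.
  by move <-; exact: Qvec_sub_Wfam.
move: g_gen; rewrite !inE; do !case/orP; move/eqP->;
  by rewrite ?Qvec_gA ?Qvec_gB ?Qvec_gX ?Qvec_gY ?Qvec_gSwap ?scalemx_sub ?sub_W.
Qed.

Lemma mxmodule_Qvec_rot m (M : 'M_(m, n4)) r :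
  mxmodule rG M -> (Qvec r <= M)%MS -> (Qvec (rot r) <= M)%MS.
Proof.
move=> /mxmoduleP modM; case: r => [[[a b] c] d] sQM.
have G_rot : (gA false * gSwap)%g \in relabG by rewrite groupM ?mem_gen ?inE ?eqxx ?orbT.
rewrite -(eqmx_scale _ (sign_neq0 a)) -Qvec_rot.
exact: submx_trans (submxMr _ sQM) (modM _ G_rot).
Qed.

Lemma mxmodule_Wfam_sub m (M : 'M_(m, n4)) r :
  mxmodule rG M -> (Qvec r <= M)%MS -> (W (blk r) <= M)%MS.
Proof.
move=> modM sQM; apply/Wfam_subP => s; rewrite eq_sym.
case/blk_traject_rot/trajectP => k _ ->.
by elim: k => [|k IHk] //=; exact: mxmodule_Qvec_rot modM IHk.
Qed.

Lemma mxmodule_Proj_neq0 m (M : 'M_(m, n4)) r :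
  mxmodule rG M -> M *m Proj r != 0 -> (W (blk r) <= M)%MS.
Proof.
move=> modM nzMP; apply: (mxmodule_Wfam_sub modM).
apply: submx_trans (sub_rV_nz (mul_Proj_sub M r) nzMP) _.
exact: mxmodule_envelop modM (Proj_envelop r) (submx_refl M).
Qed.

Lemma mxmodule_eq_sum_Wfam m (M : 'M_(m, n4)) :
  mxmodule rG M -> (M :=: \sum_(i | W i <= M) W i)%MS.
Proof.
move=> modM; apply/eqmxP/andP; split; last by apply/sumsmx_subP.
rewrite -{1}(sum_mul_Proj M) summx_sub // => r _.
have [-> | nzMP] := eqVneq (M *m Proj r) 0; first exact: sub0mx.
apply: submx_trans (mul_Proj_sub M r) _; apply: submx_trans (Qvec_sub_Wfam r) _.
exact: sumsmx_sup (mxmodule_Proj_neq0 modM nzMP) (submx_refl _).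
Qed.

Lemma mxmodule_neq0_sub m (M : 'M_(m, n4)) :
  mxmodule rG M -> M != 0 -> exists i, (W i <= M)%MS.
Proof.
move=> modM nzM; have [i sWM | noW] := pickP (fun i => W i <= M)%MS; first by exists i.
case/eqP: nzM; apply/eqP; rewrite -submx0.
by have /eqmxP/andP[sMW _] := mxmodule_eq_sum_Wfam modM; rewrite big_pred0 in sMW.
Qed.

Lemma sum_Wfam_full : (\sum_i W i == 1%:M)%MS.
Proof.
apply/eqmxP/eqmx_sym; apply: eqmx_trans (mxmodule_eq_sum_Wfam (mxmodule1 rG)) _.
by rewrite (eq_bigl xpredT) => [|i]; [exact: eqmx_refl | exact: submx1].
Qed.

Lemma Wfam_simple i : mxsimple rG (W i).
Proof.
split=> [||U modU sUW nzU]; [exact: Wfam_module | exact: Wfam_neq0 |].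
have [j sWjU] := mxmodule_neq0_sub modU nzU.
by rewrite -(Wfam_sub_eq (submx_trans sWjU sUW)).
Qed.

Lemma mxsimple_eq_Wfam (U : 'M_n4) : mxsimple rG U -> exists i, (U == W i)%MS.
Proof.
case=> modU nzU simU; have [i sWU] := mxmodule_neq0_sub modU nzU.
by exists i; rewrite /eqmx sWU simU ?Wfam_module ?Wfam_neq0.
Qed.

Lemma Wfam_noniso i j : mx_iso rG (W i) (W j) -> i = j.
Proof.
case=> f unit_f hom_f eq_f; have [r ri] := blk_surj i; move: hom_f eq_f; rewrite -ri.
move=> hom_f eq_f; apply/eqP; apply: contraT => rj.
have sQ := Qvec_sub_Wfam r.
have Qf_sub : (Qvec r *m f <= W j)%MS by rewrite -eq_f submxMr.
have Qf_Proj : Qvec r *m f *m Proj r = Qvec r *m f.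
  by rewrite -(hom_envelop_mxC (submx_trans sQ hom_f) (Proj_envelop r)) Qvec_mul_Proj eqxx scale1r.
have : Qvec r *m f = 0.
  rewrite -Qf_Proj; apply/sub_kermxP; apply: submx_trans Qf_sub _.
  exact/sub_kermxP/Wfam_mul_Proj.
move/(congr1 (mulmx^~ (invmx f))); rewrite mulmxK // mul0mx => Q0.
by have := Qvec_neq0 (R := R) r; rewrite Q0 eqxx.
Qed.

Lemma component_equivariant i x (P : 'rV[R]_n4) : x \in relabG ->
  P *m rG x *m component R i = P *m component R i *m rG x.
Proof.
move=> Gx; apply: proj_mx_reprC Gx.
- by have /mxdirect_sumsP := mxdirect_sum_Wfam; apply.
- exact: Wfam_module.
- by apply: sumsmx_module => j _; exact: Wfam_module.
apply: submx_trans (submx1 P) _; rewrite -(eqmxP sum_Wfam_full) (bigD1 i) //.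
Qed.
End Blocks.

Theorem mainTheorem2 (R : realType) :
  let rG := relabRepr R in
  (* V is the sum of the six subspaces, and the sum is direct *)
      (\sum_(i < 6) Wfam R i == 1%:M)%MS /\
      mxdirect (\sum_(i < 6) Wfam R i) /\
      (* mutual orthogonality *)
      (forall i j : 'I_6, i != j -> Wfam R i *m (Wfam R j)^T = 0) /\
      (* each is G-invariant and an irreducible representation of G *)
      (forall i : 'I_6, mxmodule rG (Wfam R i) /\ mxsimple rG (Wfam R i)) /\
      (* pairwise nonequivalent *)
      (forall i j : 'I_6, mx_iso rG (Wfam R i) (Wfam R j) -> i = j) /\
      (* uniqueness of the decomposition into G-irreducible subspaces *)
      (forall (m : nat) (U : 'I_m -> 'M[R]_n4),
         (forall k, mxsimple rG (U k)) ->
         mxdirect (\sum_(k < m) U k) -> (\sum_(k < m) U k == 1%:M)%MS ->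
         exists s : 'I_m -> 'I_6,
           bijective s /\ forall k, (U k == Wfam R (s k))%MS) /\
      (* finest: every G-invariant decomposition is coarser *)
      (forall (m : nat) (U : 'I_m -> 'M[R]_n4),
         (forall k, mxmodule rG (U k)) ->
         mxdirect (\sum_(k < m) U k) -> (\sum_(k < m) U k == 1%:M)%MS ->
         forall k, exists S : {set 'I_6},
           (U k == \sum_(i in S) Wfam R i)%MS) /\
      (* equivariance of the components *)
      (forall (i : 'I_6) (g : 'S_n4) (P : 'rV[R]_n4), g \in relabG ->
         (P *m rG g) *m component R i = (P *m component R i) *m rG g).
Proof.
move=> rG; split; first exact: sum_Wfam_full.
split; first exact: mxdirect_sum_Wfam.
split; first exact: Wfam_orth.
split; first by move=> i; split; [exact: Wfam_module | exact: Wfam_simple].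
split; first exact: Wfam_noniso.
split.
  move=> m U simU dxU fullU.
  have [s eqU] := fin_all_exists (fun k => mxsimple_eq_Wfam (simU k)).
  exists s; split=> //; apply: mxdirect_reindex_bij mxdirect_sum_Wfam Wfam_neq0 dxU _ eqU.
  by case/andP: fullU => _; apply: submx_trans (submx1 _).
split; last by move=> i g P; exact: component_equivariant.
move=> m U modU _ _ k; exists [set i | (Wfam R i <= U k)%MS]; apply/eqmxP.
apply: eqmx_trans (mxmodule_eq_sum_Wfam (modU k)) _.
by rewrite (eq_bigl [in [set i | Wfam R i <= U k]%MS]) => [|i]; rewrite ?inE.
Qed.
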